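(* Let $P,Q$ be distinct points of $D$ and let $v_1,v_2\in S^1$ be the endpoints of the chord through $P$ and $Q$, with $v_1$ closer to $P$ than to $Q$. For a point $R\in D$ the following are equivalent: (1) there exists $w\in S^1$ with $w\neq v_1,v_2$ such that $R$ is the intersection point of the line $v_1w_2$ and the line $v_2w_1$, where $w_1\in S^1$ is the intersection point of the line $wP$ with $S^1$ other than $w$, and $w_2\in S^1$ is the intersection point of the line $wQ$ with $S^1$ other than $w$; (2) $\delta(P,Q,R)=\frac{1}{2}\Delta_1'(P,Q)$.
   Context: $D$ is the open unit disk in $\mathbb R^2$ and $S^1$ its boundary circle. Regard $D$ as the Beltrami–Klein model (hyperbolic lines are chords). For distinct $P,Q\in D$ with chord endpoints $v_1,v_2\in S^1$, $d'(P,Q)=\tfrac12\left|\log\frac{|v_1Q||v_2P|}{|v_1P||v_2Q|}\right|$ (Euclidean lengths), $d'(P,P)=0$; $\Delta_n'(P,Q)=\log\frac{e^{n d'(P,Q)}+1}{e^{n d'(P,Q)}-1}$ for $n\in\mathbb Z_{>0}$; $\delta(P,Q,R)=\min\{d'(R,S): S \text{ on the chord through } P,Q\}$. *)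

From Stdlib Require Import Reals.
Open Scope R_scope.

Definition pt := (R * R)%type.

Definition in_D (P : pt) : Prop := fst P ^ 2 + snd P ^ 2 < 1.
Definition on_S1 (P : pt) : Prop := fst P ^ 2 + snd P ^ 2 = 1.

Definition edist (A B : pt) : R :=
  sqrt ((fst A - fst B) ^ 2 + (snd A - snd B) ^ 2).

Definition collinear (A B C : pt) : Prop :=
  (fst B - fst A) * (snd C - snd A) - (snd B - snd A) * (fst C - fst A) = 0.

(* Endpoints on S^1 of the chord through P <> Q (in D): the points
   P + t (Q - P) with |P + t (Q - P)| = 1, i.e. roots t of
   a t^2 + 2 b t + c = 0; sgn = 1 / sgn = -1 selects the two roots. *)
Definition chord_end (P Q : pt) (sgn : R) : pt :=
  let dx := fst Q - fst P in
  let dy := snd Q - snd P in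
  let a := dx ^ 2 + dy ^ 2 in
  let b := fst P * dx + snd P * dy in
  let c := fst P ^ 2 + snd P ^ 2 - 1 in
  let t := (- b + sgn * sqrt (b ^ 2 - a * c)) / a in
  (fst P + t * dx, snd P + t * dy).

(* Hilbert (Klein model) distance d'(P,Q); the formula is symmetric in
   the two endpoints because of the absolute value. *)
Definition dK (P Q : pt) : R :=
  if Req_EM_T (edist P Q) 0 then 0 else
  let v1 := chord_end P Q 1 in
  let v2 := chord_end P Q (-1) in
  / 2 * Rabs (ln ((edist v1 Q * edist v2 P) / (edist v1 P * edist v2 Q))).

Definition DeltaK (n : nat) (P Q : pt) : R :=
  ln ((exp (INR n * dK P Q) + 1) / (exp (INR n * dK P Q) - 1)).

Definition on_chord (P Q S : pt) : Prop :=
  in_D S /\ exists t : R, S = (fst P + t * (fst Q - fst P), snd P + t * (snd Q - snd P)).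

(* "delta(P,Q,R) = x": x is the minimum of d'(R,S) over S on the chord
   through P and Q (attained and a lower bound). *)
Definition delta_is (P Q R0 : pt) (x : R) : Prop :=
  (exists S, on_chord P Q S /\ dK R0 S = x) /\
  (forall S, on_chord P Q S -> x <= dK R0 S).

From Stdlib Require Import Reals Lra Nsatz.
Open Scope R_scope.

(* A projective automorphism of the disk, which is an isometry of the Klein model, moves the
   chord v1 v2 to the diameter from (-1, 0) to (1, 0) and P, Q to (p, 0), (q, 0) with p < q;
   both conditions are invariant under it.  There, parametrizing the circle by the slope t of
   the lines through (-1, 0), the line from the point t through (p, 0) meets the circle again
   at the point t1 with t t1 = (p - 1) / (p + 1), and condition (1) becomes the ellipse
   (1 - p) (1 + q) Y^2 = (1 - q) (1 + p) (1 - X^2) through v1 and v2.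
   For condition (2), cosh^2 d'(A, B) = (1 - A.B)^2 / ((1 - |A|^2) (1 - |B|^2)): the point of
   the diameter nearest to R = (X, Y) is (X, 0), with cosh^2 d' = (1 - X^2) / (1 - X^2 - Y^2),
   while cosh^2 (Delta'_1 / 2) = E / (E - 1) for the cross ratio
   E = e^(2 d'(P, Q)) = (1 + q) (1 - p) / ((1 - q) (1 + p)); equating the two gives the same
   ellipse. *)

Definition dot (A B : pt) : R := fst A * fst B + snd A * snd B.

Definition orient (A B C : pt) : R :=
  (fst B - fst A) * (snd C - snd A) - (snd B - snd A) * (fst C - fst A).

Definition in_cD (X : pt) : Prop := fst X ^ 2 + snd X ^ 2 <= 1.

Definition line_point (A B : pt) (t : R) : pt :=
  (fst A + t * (fst B - fst A), snd A + t * (snd B - snd A)).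

Definition klein_cosh2 (A B : pt) : R :=
  (1 - dot A B) ^ 2 / ((1 - dot A A) * (1 - dot B B)).

Lemma dot_diag X : dot X X = fst X ^ 2 + snd X ^ 2.
Proof. unfold dot; ring. Qed.

Lemma inv_sum_lt f g : 1 <= g -> g < f -> g + / g < f + / f.
Proof.
  intros Hg Hgf.
  assert (E : f + / f - (g + / g) = (f - g) * (f * g - 1) / (f * g)) by (field; split; lra).
  assert (1 < f * g) by nra.
  assert (0 < (f - g) * (f * g - 1) / (f * g))
    by (apply Rdiv_lt_0_compat; [apply Rmult_lt_0_compat|]; lra).
  lra.
Qed.

Lemma inv_sum_inj f g : 1 <= f -> 1 <= g -> f + / f = g + / g -> f = g.
Proof.
  intros Hf Hg E.
  destruct (Rtotal_order f g) as [H | [H | H]]; auto.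
  - pose proof (inv_sum_lt g f Hf H); lra.
  - pose proof (inv_sum_lt f g Hg H); lra.
Qed.

Lemma cosh_sq_exp x : cosh x ^ 2 = (exp x ^ 2 + / exp x ^ 2 + 2) / 4.
Proof.
  unfold cosh. rewrite exp_Ropp. pose proof (exp_pos x). field. lra.
Qed.

Lemma exp_ge1 x : 0 <= x -> 1 <= exp x.
Proof. intros Hx. pose proof (exp_ineq1_le x). lra. Qed.

Lemma cosh_sq_lt x y : 0 <= x -> x < y -> cosh x ^ 2 < cosh y ^ 2.
Proof.
  intros Hx Hxy. rewrite !cosh_sq_exp.
  pose proof (exp_ge1 x Hx).
  pose proof (exp_increasing x y Hxy).
  pose proof (inv_sum_lt (exp y ^ 2) (exp x ^ 2) ltac:(nra) ltac:(nra)).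
  lra.
Qed.

Lemma cosh_sq_le_iff x y : 0 <= x -> 0 <= y -> (x <= y <-> cosh x ^ 2 <= cosh y ^ 2).
Proof.
  intros Hx Hy. split; intros H.
  - destruct H as [H | ->]; [left; apply cosh_sq_lt|]; lra.
  - destruct (Rle_lt_dec x y) as [|H']; auto.
    pose proof (cosh_sq_lt y x Hy H'); lra.
Qed.

Lemma cosh_sq_inj x y : 0 <= x -> 0 <= y -> cosh x ^ 2 = cosh y ^ 2 -> x = y.
Proof.
  intros Hx Hy E. apply Rle_antisym; apply cosh_sq_le_iff; lra.
Qed.

Lemma cosh_half_ln_sq r : 0 < r -> cosh (/ 2 * ln r) ^ 2 = (r + / r + 2) / 4.
Proof.
  intros Hr. rewrite cosh_sq_exp.
  replace (exp (/ 2 * ln r) ^ 2) with r; [reflexivity|].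
  rewrite <- (exp_ln r Hr) at 1.
  replace (ln r) with (/ 2 * ln r + / 2 * ln r) at 1 by field.
  rewrite exp_plus. ring.
Qed.

Lemma cosh_Rabs x : cosh (Rabs x) = cosh x.
Proof.
  unfold cosh. destruct (Rcase_abs x) as [H | H].
  - rewrite (Rabs_left x H), Ropp_involutive. field.
  - rewrite (Rabs_right x H). reflexivity.
Qed.

Lemma edist_line_point A B t t' :
  edist (line_point A B t) (line_point A B t') = Rabs (t - t') * edist A B.
Proof.
  unfold edist, line_point; cbn [fst snd].
  rewrite <- sqrt_Rsqr_abs, <- sqrt_mult_alt by apply Rle_0_sqr.
  f_equal. unfold Rsqr. ring.
Qed.

Lemma line_point_0 A B : line_point A B 0 = A.
Proof. destruct A; unfold line_point; cbn [fst snd]; f_equal; ring. Qed.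

Lemma line_point_1 A B : line_point A B 1 = B.
Proof. destruct A, B; unfold line_point; cbn [fst snd]; f_equal; ring. Qed.

Lemma edist_eq0 A B : edist A B = 0 -> A = B.
Proof.
  destruct A as [a1 a2], B as [b1 b2]; unfold edist; cbn [fst snd]; intros E.
  pose proof (pow2_ge_0 (a1 - b1)); pose proof (pow2_ge_0 (a2 - b2)).
  apply sqrt_eq_0 in E; [|lra].
  assert (a1 = b1) by nra. assert (a2 = b2) by nra. subst; reflexivity.
Qed.

Lemma chord_end_roots A B : in_D A -> A <> B ->
  exists t1 t2,
    chord_end A B 1 = line_point A B t1 /\ chord_end A B (-1) = line_point A B t2 /\
    t2 <= t1 /\
    forall t, fst (line_point A B t) ^ 2 + snd (line_point A B t) ^ 2 - 1 =
      ((fst B - fst A) ^ 2 + (snd B - snd A) ^ 2) * (t - t1) * (t - t2).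
Proof.
  destruct A as [a1 a2], B as [b1 b2]. unfold in_D; cbn [fst snd]. intros HA HAB.
  set (a := (b1 - a1) ^ 2 + (b2 - a2) ^ 2).
  set (b := a1 * (b1 - a1) + a2 * (b2 - a2)).
  set (c := a1 ^ 2 + a2 ^ 2 - 1).
  set (sq := sqrt (b ^ 2 - a * c)).
  assert (Ha : 0 < a).
  { pose proof (pow2_ge_0 (b1 - a1)); pose proof (pow2_ge_0 (b2 - a2)).
    destruct (Rle_lt_dec a 0) as [E|]; [|lra].
    exfalso; apply HAB. unfold a in E.
    assert ((b1 - a1) ^ 2 = 0) by lra. assert ((b2 - a2) ^ 2 = 0) by lra.
    f_equal; nra. }
  assert (Hsq : sq * sq = b ^ 2 - a * c)
    by (apply sqrt_sqrt; pose proof (pow2_ge_0 b); unfold c; nra).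
  assert (0 <= sq) by apply sqrt_pos.
  exists ((- b + 1 * sq) / a), ((- b + -1 * sq) / a).
  split; [reflexivity|]. split; [reflexivity|]. split.
  - unfold Rdiv. apply Rmult_le_compat_r; [left; apply Rinv_0_lt_compat|]; lra.
  - intros t. fold a.
    replace (a * (t - (- b + 1 * sq) / a) * (t - (- b + -1 * sq) / a))
      with (((a * t + b) ^ 2 - sq * sq) / a) by (field; lra).
    rewrite Hsq. replace (((a * t + b) ^ 2 - (b ^ 2 - a * c)) / a)
      with (a * t ^ 2 + 2 * b * t + c) by (field; lra).
    unfold line_point, a, b, c; cbn [fst snd]. ring.
Qed.

Lemma cosh_dK_sq A B : in_D A -> in_D B -> cosh (dK A B) ^ 2 = klein_cosh2 A B.
Proof.
  intros HA HB. unfold klein_cosh2. rewrite !dot_diag. unfold in_D in HA, HB.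
  unfold dK. destruct (Req_EM_T (edist A B) 0) as [E | E].
  { apply edist_eq0 in E; subst. rewrite cosh_0. unfold dot. field. lra. }
  assert (HAB : A <> B).
  { intros ->. apply E. unfold edist. rewrite <- sqrt_0. f_equal. ring. }
  destruct (chord_end_roots A B HA HAB) as (t1 & t2 & -> & -> & Ht & Hf).
  set (a := (fst B - fst A) ^ 2 + (snd B - snd A) ^ 2) in Hf.
  assert (Ha : a = edist A B ^ 2).
  { unfold a, edist. rewrite pow2_sqrt; [ring|].
    pose proof (pow2_ge_0 (fst A - fst B)); pose proof (pow2_ge_0 (snd A - snd B)); lra. }
  assert (Hd : 0 < edist A B) by (destruct (sqrt_pos _ : 0 <= edist A B); [|congruence]; auto).
  pose proof (Hf 0) as HfA; pose proof (Hf 1) as HfB.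
  rewrite line_point_0 in HfA; rewrite line_point_1 in HfB.
  assert (0 < a) by (rewrite Ha; nra).
  assert (t1 * t2 < 0) by nra.
  assert ((1 - t1) * (1 - t2) < 0) by nra.
  assert (t2 < 0 < t1) by nra.
  assert (t2 < 1 < t1) by nra.
  assert (HdA : forall t, edist (line_point A B t) A = Rabs (t - 0) * edist A B)
    by (intros t; rewrite <- edist_line_point, line_point_0; reflexivity).
  assert (HdB : forall t, edist (line_point A B t) B = Rabs (t - 1) * edist A B)
    by (intros t; rewrite <- edist_line_point, line_point_1; reflexivity).
  rewrite !HdA, !HdB, (Rabs_right (t1 - 1)), (Rabs_left (t2 - 0)), (Rabs_right (t1 - 0)),
    (Rabs_left (t2 - 1)) by lra.
  (* A, B, v1, v2 sit at the parameters 0, 1, t1, t2; [rho] is their cross ratio *)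
  set (rho := (t1 - 1) * (- t2) / (t1 * (1 - t2))).
  replace (_ * _ / _) with rho by (unfold rho; field; repeat split; lra).
  assert (0 < rho) by (unfold rho; apply Rdiv_lt_0_compat; nra).
  replace (/ 2 * Rabs (ln rho)) with (Rabs (/ 2 * ln rho))
    by (rewrite Rabs_mult, (Rabs_pos_eq (/ 2)); lra).
  rewrite cosh_Rabs, cosh_half_ln_sq by assumption.
  replace (1 - (fst A ^ 2 + snd A ^ 2)) with (- (a * t1 * t2)) by lra.
  replace (1 - (fst B ^ 2 + snd B ^ 2)) with (- (a * (1 - t1) * (1 - t2))) by lra.
  replace (1 - dot A B) with (a * (t1 + t2 - 2 * t1 * t2) / 2)
    by (unfold dot, a in *; lra).
  unfold rho. field. repeat split; lra.
Qed.

Lemma dK_nonneg A B : 0 <= dK A B.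
Proof.
  unfold dK. destruct (Req_EM_T _ _); [lra|].
  pose proof (Rabs_pos (ln ((edist (chord_end A B 1) B * edist (chord_end A B (-1)) A) /
                            (edist (chord_end A B 1) A * edist (chord_end A B (-1)) B)))).
  lra.
Qed.

Lemma le_dK_iff x A B : 0 <= x -> in_D A -> in_D B ->
  (x <= dK A B <-> cosh x ^ 2 <= klein_cosh2 A B).
Proof.
  intros Hx HA HB. rewrite <- cosh_dK_sq by assumption.
  apply cosh_sq_le_iff; [assumption | apply dK_nonneg].
Qed.

Lemma eq_dK_iff x A B : 0 <= x -> in_D A -> in_D B ->
  (x = dK A B <-> cosh x ^ 2 = klein_cosh2 A B).
Proof.
  intros Hx HA HB. rewrite <- cosh_dK_sq by assumption.
  split; [intros ->; reflexivity|]. apply cosh_sq_inj; [assumption | apply dK_nonneg].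
Qed.

Lemma dK_eq_of_klein_cosh2 A B A' B' : in_D A -> in_D B -> in_D A' -> in_D B' ->
  klein_cosh2 A' B' = klein_cosh2 A B -> dK A' B' = dK A B.
Proof.
  intros HA HB HA' HB' E. apply eq_dK_iff; auto using dK_nonneg.
  rewrite cosh_dK_sq; auto.
Qed.

Definition chord_construction (v1 v2 P Q R0 : pt) : Prop :=
  exists w w1 w2 : pt,
    on_S1 w /\ w <> v1 /\ w <> v2 /\
    on_S1 w1 /\ w1 <> w /\ collinear w P w1 /\
    on_S1 w2 /\ w2 <> w /\ collinear w Q w2 /\
    collinear v1 w2 R0 /\ collinear v2 w1 R0.

Record klein_map (f : pt -> pt) : Prop := {
  klein_map_S1 : forall X, on_S1 X -> on_S1 (f X);
  klein_map_D : forall X, in_D X -> in_D (f X);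
  klein_map_collinear : forall A B C, in_cD A -> in_cD B -> in_cD C ->
    collinear A B C -> collinear (f A) (f B) (f C);
  klein_map_dK : forall A B, in_D A -> in_D B -> dK (f A) (f B) = dK A B }.

Definition cancel_on_cD (f g : pt -> pt) : Prop := forall X, in_cD X -> g (f X) = X.

Definition klein_bijection (f g : pt -> pt) : Prop :=
  klein_map f /\ klein_map g /\ cancel_on_cD f g /\ cancel_on_cD g f.

Lemma klein_bijection_sym f g : klein_bijection f g -> klein_bijection g f.
Proof. unfold klein_bijection; tauto. Qed.

Lemma in_D_cD X : in_D X -> in_cD X.
Proof. unfold in_D, in_cD; lra. Qed.

Lemma on_S1_cD X : on_S1 X -> in_cD X.
Proof. unfold on_S1, in_cD; lra. Qed.

Lemma klein_map_cD f X : klein_map f -> in_cD X -> in_cD (f X).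
Proof.
  intros Hf [HX | HX].
  - apply in_D_cD, (klein_map_D f Hf), HX.
  - apply on_S1_cD, (klein_map_S1 f Hf), HX.
Qed.

Lemma cancel_on_cD_neq f g X Y : cancel_on_cD f g -> in_cD X -> in_cD Y ->
  X <> Y -> f X <> f Y.
Proof. intros Hfg HX HY HXY E. apply HXY. rewrite <- (Hfg X), <- (Hfg Y), E; auto. Qed.

Lemma chord_construction_image f g v1 v2 P Q R0 :
  klein_map f -> cancel_on_cD f g ->
  in_cD v1 -> in_cD v2 -> in_cD P -> in_cD Q -> in_cD R0 ->
  chord_construction v1 v2 P Q R0 -> chord_construction (f v1) (f v2) (f P) (f Q) (f R0).
Proof.
  intros Hf Hfg Hv1 Hv2 HP HQ HR
    (w & w1 & w2 & Hw & Hwv1 & Hwv2 & Hw1 & Hw1w & HwPw1 & Hw2 & Hw2w & HwQw2 & Hv1w2 & Hv2w1).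
  pose proof (on_S1_cD w Hw); pose proof (on_S1_cD w1 Hw1); pose proof (on_S1_cD w2 Hw2).
  exists (f w), (f w1), (f w2).
  repeat split;
    solve [ apply (klein_map_S1 f Hf); assumption
          | apply (cancel_on_cD_neq f g); assumption
          | apply (klein_map_collinear f Hf); assumption ].
Qed.

Lemma chord_construction_transfer f g v1 v2 P Q R0 : klein_bijection f g ->
  in_cD v1 -> in_cD v2 -> in_cD P -> in_cD Q -> in_cD R0 ->
  (chord_construction v1 v2 P Q R0 <-> chord_construction (f v1) (f v2) (f P) (f Q) (f R0)).
Proof.
  intros (Hf & Hg & Hfg & Hgf) Hv1 Hv2 HP HQ HR. split.
  - apply (chord_construction_image f g); assumption.
  - intros H. rewrite <- (Hfg v1), <- (Hfg v2), <- (Hfg P), <- (Hfg Q), <- (Hfg R0) by assumption.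
    apply (chord_construction_image g f); auto using klein_map_cD.
Qed.

Lemma on_chord_iff P Q S : P <> Q -> (on_chord P Q S <-> in_D S /\ collinear P Q S).
Proof.
  destruct P as [p1 p2], Q as [q1 q2], S as [s1 s2]. unfold on_chord, collinear; cbn [fst snd].
  intros HPQ. split.
  - intros [HS [t E]]. split; [assumption|]. injection E as -> ->. ring.
  - intros [HS Hc]. split; [assumption|].
    destruct (Req_dec q1 p1) as [E1 | E1].
    + subst q1. assert (E2 : q2 - p2 <> 0) by (intros E2; apply HPQ; f_equal; lra).
      assert (s1 = p1).
      { apply Rminus_diag_uniq, (Rmult_eq_reg_l (q2 - p2)); [lra | assumption]. }
      exists ((s2 - p2) / (q2 - p2)). f_equal; [subst; ring | field; assumption].
    + exists ((s1 - p1) / (q1 - p1)). f_equal; [field; lra|].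
      apply (Rmult_eq_reg_l (q1 - p1)); [|lra]. field_simplify; lra.
Qed.

Lemma delta_is_image f g P Q R0 x : klein_bijection f g ->
  in_D P -> in_D Q -> in_D R0 -> P <> Q ->
  delta_is P Q R0 x -> delta_is (f P) (f Q) (f R0) x.
Proof.
  intros (Hf & Hg & Hfg & Hgf) HP HQ HR HPQ [[S [HS <-]] Hmin].
  assert (HfPQ : f P <> f Q) by (apply (cancel_on_cD_neq f g); auto using in_D_cD).
  pose proof (klein_map_D f Hf) as HfD.
  split.
  - exists (f S). rewrite on_chord_iff in HS |- * by assumption. destruct HS as [HS HPQS].
    split; [split; [auto|] | apply (klein_map_dK f Hf); assumption].
    apply (klein_map_collinear f Hf); auto using in_D_cD.
  - intros S' HS'. rewrite on_chord_iff in HS' by assumption. destruct HS' as [HS' Hc].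
    assert (HgS' : on_chord P Q (g S')).
    { rewrite on_chord_iff by assumption. split; [apply (klein_map_D g Hg); assumption|].
      rewrite <- (Hfg P), <- (Hfg Q) by auto using in_D_cD.
      apply (klein_map_collinear g Hg); auto using in_D_cD. }
    rewrite <- (Hgf S') by auto using in_D_cD.
    rewrite (klein_map_dK f Hf) by (auto; apply (klein_map_D g Hg); assumption).
    apply Hmin, HgS'.
Qed.

Lemma delta_is_transfer f g P Q R0 x : klein_bijection f g ->
  in_D P -> in_D Q -> in_D R0 -> P <> Q ->
  (delta_is P Q R0 x <-> delta_is (f P) (f Q) (f R0) x).
Proof.
  intros Hb HP HQ HR HPQ. split; [apply (delta_is_image f g); assumption|].
  pose proof Hb as (Hf & Hg & Hfg & Hgf).
  intros H. rewrite <- (Hfg P), <- (Hfg Q), <- (Hfg R0) by auto using in_D_cD.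
  apply (delta_is_image g f); auto using klein_bijection_sym, klein_map_D.
  apply (cancel_on_cD_neq f g); auto using in_D_cD.
Qed.

Section AxisMap.

Variables ux uy h s : R.
Hypothesis Hu : ux ^ 2 + uy ^ 2 = 1.
Hypothesis Hhs : h ^ 2 + s ^ 2 = 1.
Hypothesis Hs : 0 < s.

Definition along (X : pt) : R := ux * fst X + uy * snd X.
Definition across (X : pt) : R := - uy * fst X + ux * snd X.
Definition axis_den (X : pt) : R := 1 - h * across X.

(* In the orthonormal frame (along, across): the projective automorphism of the disk that
   sends the chord [across = h] to the diameter [across = 0], where [s = sqrt (1 - h ^ 2)]. *)
Definition axis_map (X : pt) : pt :=
  (s * along X / axis_den X, (across X - h) / axis_den X).

Definition axis_map_inv (Y : pt) : pt :=
  let a := fst Y * s / (1 + h * snd Y) in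
  let b := (snd Y + h) / (1 + h * snd Y) in
  (a * ux - b * uy, a * uy + b * ux).

Lemma dot_along_across X Y : dot X Y = along X * along Y + across X * across Y.
Proof.
  destruct X as [x1 x2], Y as [y1 y2]. unfold dot, along, across; cbn [fst snd].
  pose proof Hu as Hu'. cbn [pow] in Hu'. nsatz.
Qed.

Lemma along_across_decomp X :
  X = (along X * ux - across X * uy, along X * uy + across X * ux).
Proof.
  destruct X as [x1 x2]. unfold along, across; cbn [fst snd].
  pose proof Hu as Hu'. cbn [pow] in Hu'. f_equal; nsatz.
Qed.

Lemma edist_along_across A B :
  edist A B = sqrt ((along A - along B) ^ 2 + (across A - across B) ^ 2).
Proof.
  destruct A as [a1 a2], B as [b1 b2]. unfold edist, along, across; cbn [fst snd]. f_equal.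
  pose proof Hu as Hu'. cbn [pow] in *. nsatz.
Qed.

Lemma along_comb a b : along (a * ux - b * uy, a * uy + b * ux) = a.
Proof. unfold along; cbn [fst snd]. pose proof Hu as Hu'. cbn [pow] in Hu'. nsatz. Qed.

Lemma across_comb a b : across (a * ux - b * uy, a * uy + b * ux) = b.
Proof. unfold across; cbn [fst snd]. pose proof Hu as Hu'. cbn [pow] in Hu'. nsatz. Qed.

Lemma axis_den_pos X : in_cD X -> 0 < axis_den X.
Proof.
  unfold in_cD. rewrite <- dot_diag, dot_along_across. intros H. unfold axis_den.
  assert (h ^ 2 < 1) by nra. assert (across X ^ 2 <= 1) by nra. nra.
Qed.

Lemma one_minus_dot_axis_map X Y : 0 < axis_den X -> 0 < axis_den Y ->
  1 - dot (axis_map X) (axis_map Y) = s ^ 2 * (1 - dot X Y) / (axis_den X * axis_den Y).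
Proof.
  intros HX HY. rewrite (dot_along_across X Y). unfold dot, axis_map, axis_den in *; cbn [fst snd].
  field_simplify; [|lra..]. f_equal.
  pose proof Hhs as Hhs'. cbn [pow] in *. nsatz.
Qed.

Lemma one_minus_norm2_axis_map X : 0 < axis_den X ->
  exists k, 0 < k /\
    1 - (fst (axis_map X) ^ 2 + snd (axis_map X) ^ 2) = k * (1 - (fst X ^ 2 + snd X ^ 2)).
Proof.
  intros HX. exists (s ^ 2 / axis_den X ^ 2). split.
  - apply Rdiv_lt_0_compat; apply pow_lt; assumption.
  - rewrite <- !dot_diag, one_minus_dot_axis_map by assumption. field. lra.
Qed.

Lemma axis_map_in_D X : 0 < axis_den X -> (in_D (axis_map X) <-> in_D X).
Proof.
  intros HX. destruct (one_minus_norm2_axis_map X HX) as (k & Hk & E).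
  unfold in_D. split; intros; nra.
Qed.

Lemma axis_map_on_S1 X : 0 < axis_den X -> (on_S1 (axis_map X) <-> on_S1 X).
Proof.
  intros HX. destruct (one_minus_norm2_axis_map X HX) as (k & Hk & E).
  unfold on_S1. split; intros H.
  - assert (k * (1 - (fst X ^ 2 + snd X ^ 2)) = 0) by lra. nra.
  - rewrite H in E. lra.
Qed.

Lemma klein_cosh2_axis_map A B : 0 < axis_den A -> 0 < axis_den B ->
  in_D A -> in_D B -> klein_cosh2 (axis_map A) (axis_map B) = klein_cosh2 A B.
Proof.
  intros HA HB HDA HDB. unfold klein_cosh2. rewrite !one_minus_dot_axis_map by assumption.
  unfold in_D in *. rewrite !dot_diag. field. repeat split; lra.
Qed.

Lemma orient_along_across A B C :
  orient A B C =
  (along B - along A) * (across C - across A) - (across B - across A) * (along C - along A).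
Proof.
  destruct A as [a1 a2], B as [b1 b2], C as [c1 c2]. unfold orient, along, across; cbn [fst snd].
  pose proof Hu as Hu'. cbn [pow] in Hu'. nsatz.
Qed.

Lemma orient_homogeneous xa ya da xb yb db xc yc dc : da <> 0 -> db <> 0 -> dc <> 0 ->
  orient (xa / da, ya / da) (xb / db, yb / db) (xc / dc, yc / dc) =
  (da * (xb * yc - yb * xc) - xa * (db * yc - yb * dc) + ya * (db * xc - xb * dc)) /
  (da * db * dc).
Proof. intros. unfold orient; cbn [fst snd]. field. auto. Qed.

Lemma orient_axis_map A B C : 0 < axis_den A -> 0 < axis_den B -> 0 < axis_den C ->
  orient (axis_map A) (axis_map B) (axis_map C) =
  s ^ 3 * orient A B C / (axis_den A * axis_den B * axis_den C).
Proof.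
  intros HA HB HC. unfold axis_map. rewrite orient_homogeneous by lra.
  rewrite orient_along_across. f_equal. unfold axis_den.
  (* in homogeneous coordinates the map is linear, of determinant s (1 - h ^ 2) = s ^ 3 *)
  replace (s ^ 3) with (s * (1 - h ^ 2)) by (rewrite <- Hhs; ring). ring.
Qed.

Lemma axis_map_collinear A B C : 0 < axis_den A -> 0 < axis_den B -> 0 < axis_den C ->
  (collinear (axis_map A) (axis_map B) (axis_map C) <-> collinear A B C).
Proof.
  intros HA HB HC. change (orient (axis_map A) (axis_map B) (axis_map C) = 0 <-> orient A B C = 0).
  rewrite orient_axis_map by assumption.
  assert (Hs3 : 0 < s ^ 3) by (apply pow_lt; assumption).
  assert (Hden : 0 < axis_den A * axis_den B * axis_den C)
    by (repeat apply Rmult_lt_0_compat; assumption).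
  split; intros H.
  - destruct (Rmult_integral _ _ H) as [H1 | H1].
    + destruct (Rmult_integral _ _ H1); [lra | assumption].
    + exfalso. revert H1. apply Rinv_neq_0_compat. lra.
  - rewrite H. unfold Rdiv. ring.
Qed.

Lemma axis_map_invK X : 0 < axis_den X -> axis_map_inv (axis_map X) = X.
Proof.
  intros HX. rewrite (along_across_decomp X) at 2.
  unfold axis_map_inv, axis_map; cbn [fst snd].
  assert (Hk : 1 + h * ((across X - h) / axis_den X) = s ^ 2 / axis_den X)
    by (unfold axis_den in *; replace (s ^ 2) with (1 - h ^ 2) by lra; field; lra).
  rewrite Hk. unfold axis_den in *.
  replace (((across X - h) / (1 - h * across X) + h) / (s ^ 2 / (1 - h * across X)))
    with (across X) by (replace (s ^ 2) with (1 - h ^ 2) by lra; field; split; nra).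
  replace (s * along X / (1 - h * across X) * s / (s ^ 2 / (1 - h * across X)))
    with (along X) by (field; split; lra).
  reflexivity.
Qed.

Lemma axis_den_inv Y : in_cD Y -> axis_den (axis_map_inv Y) = s ^ 2 / (1 + h * snd Y) /\
  0 < 1 + h * snd Y.
Proof.
  unfold in_cD. intros HY.
  assert (H1 : 0 < 1 + h * snd Y).
  { assert (h ^ 2 < 1) by nra. assert (snd Y ^ 2 <= 1) by nra. nra. }
  split; [|exact H1].
  unfold axis_den, axis_map_inv. rewrite across_comb.
  replace (s ^ 2) with (1 - h ^ 2) by lra. field. lra.
Qed.

Lemma axis_den_inv_pos Y : in_cD Y -> 0 < axis_den (axis_map_inv Y).
Proof.
  intros HY. destruct (axis_den_inv Y HY) as [-> H1].
  apply Rdiv_lt_0_compat; [apply pow_lt|]; assumption.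
Qed.

Lemma axis_mapK Y : in_cD Y -> axis_map (axis_map_inv Y) = Y.
Proof.
  intros HY. destruct (axis_den_inv Y HY) as [Hd H1].
  unfold axis_map. rewrite Hd. unfold axis_map_inv. rewrite along_comb, across_comb.
  destruct Y as [y1 y2]; cbn [fst snd] in *. f_equal.
  - field. lra.
  - replace (s ^ 2) with (1 - h ^ 2) by lra. field. split; [lra|]. nra.
Qed.

Lemma axis_map_klein : klein_map axis_map.
Proof.
  split.
  - intros X HX. apply axis_map_on_S1; [apply axis_den_pos, on_S1_cD|]; assumption.
  - intros X HX. apply axis_map_in_D; [apply axis_den_pos, in_D_cD|]; assumption.
  - intros A B C HA HB HC. apply axis_map_collinear; apply axis_den_pos; assumption.
  - intros A B HA HB. pose proof (axis_den_pos A (in_D_cD A HA)).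
    pose proof (axis_den_pos B (in_D_cD B HB)).
    apply dK_eq_of_klein_cosh2; [assumption | assumption | apply axis_map_in_D; assumption
      | apply axis_map_in_D; assumption | apply klein_cosh2_axis_map; assumption].
Qed.

Lemma axis_map_inv_klein : klein_map axis_map_inv.
Proof.
  assert (HD : forall Y, in_D Y -> in_D (axis_map_inv Y)).
  { intros Y HY. apply (axis_map_in_D _ (axis_den_inv_pos Y (in_D_cD Y HY))).
    rewrite axis_mapK by apply in_D_cD, HY. exact HY. }
  split; [|exact HD|..].
  - intros Y HY. apply (axis_map_on_S1 _ (axis_den_inv_pos Y (on_S1_cD Y HY))).
    rewrite axis_mapK by apply on_S1_cD, HY. exact HY.
  - intros A B C HA HB HC HABC.
    apply axis_map_collinear; try apply axis_den_inv_pos; try assumption.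
    rewrite !axis_mapK; assumption.
  - intros A B HA HB.
    rewrite <- (klein_map_dK axis_map axis_map_klein) by auto.
    rewrite !axis_mapK by auto using in_D_cD. reflexivity.
Qed.

Lemma axis_map_bijection : klein_bijection axis_map axis_map_inv.
Proof.
  split; [exact axis_map_klein|]. split; [exact axis_map_inv_klein|]. split.
  - intros X HX. apply axis_map_invK, axis_den_pos, HX.
  - intros Y HY. apply axis_mapK, HY.
Qed.

End AxisMap.

Lemma chord_frame v1 v2 : on_S1 v1 -> on_S1 v2 -> v1 <> v2 ->
  exists ux uy h s, ux ^ 2 + uy ^ 2 = 1 /\ h ^ 2 + s ^ 2 = 1 /\ 0 < s /\
    along ux uy v1 = - s /\ along ux uy v2 = s /\ across ux uy v1 = h /\ across ux uy v2 = h.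
Proof.
  destruct v1 as [a1 a2], v2 as [b1 b2]. unfold on_S1; cbn [fst snd]. intros H1 H2 H12.
  set (d := edist (a1, a2) (b1, b2)).
  assert (Hd2 : d ^ 2 = (b1 - a1) ^ 2 + (b2 - a2) ^ 2).
  { unfold d, edist; cbn [fst snd]. rewrite pow2_sqrt; [ring|].
    pose proof (pow2_ge_0 (a1 - b1)); pose proof (pow2_ge_0 (a2 - b2)); lra. }
  assert (Hd : 0 < d).
  { destruct (sqrt_pos _ : 0 <= d) as [|E]; [assumption|].
    exfalso; apply H12, edist_eq0. symmetry; exact E. }
  set (ux := (b1 - a1) / d). set (uy := (b2 - a2) / d).
  assert (Hu : ux ^ 2 + uy ^ 2 = 1).
  { unfold ux, uy. replace (((b1 - a1) / d) ^ 2 + ((b2 - a2) / d) ^ 2)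
      with (((b1 - a1) ^ 2 + (b2 - a2) ^ 2) / d ^ 2) by (field; lra).
    rewrite <- Hd2. field. lra. }
  assert (Hal1 : along ux uy (a1, a2) = - (d / 2)).
  { unfold along, ux, uy; cbn [fst snd]. apply (Rmult_eq_reg_r d); [|lra].
    field_simplify; [|lra]. cbn [pow] in *. nra. }
  assert (Hal2 : along ux uy (b1, b2) = d / 2).
  { unfold along, ux, uy; cbn [fst snd]. apply (Rmult_eq_reg_r d); [|lra].
    field_simplify; [|lra]. cbn [pow] in *. nra. }
  exists ux, uy, (across ux uy (a1, a2)), (d / 2). repeat split; try assumption; try lra.
  - replace ((d / 2) ^ 2) with (along ux uy (a1, a2) ^ 2) by (rewrite Hal1; ring).
    rewrite <- H1. change (a1 ^ 2 + a2 ^ 2) with (fst (a1, a2) ^ 2 + snd (a1, a2) ^ 2).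
    rewrite <- dot_diag, (dot_along_across ux uy Hu). ring.
  - unfold across, ux, uy; cbn [fst snd]. field. lra.
Qed.

Lemma chord_to_axis v1 v2 P Q :
  on_S1 v1 -> on_S1 v2 -> v1 <> v2 -> collinear v1 v2 P -> collinear v1 v2 Q ->
  in_D P -> in_D Q -> edist v1 P < edist v1 Q ->
  exists f g p q, klein_bijection f g /\ f v1 = (-1, 0) /\ f v2 = (1, 0) /\
    f P = (p, 0) /\ f Q = (q, 0) /\ -1 < p /\ p < q /\ q < 1.
Proof.
  intros Hv1 Hv2 Hv12 HcP HcQ HP HQ Hd.
  destruct (chord_frame v1 v2 Hv1 Hv2 Hv12)
    as (ux & uy & h & s & Hu & Hhs & Hs & Hal1 & Hal2 & Hac1 & Hac2).
  assert (Hline : forall Z, collinear v1 v2 Z -> across ux uy Z = h).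
  { intros Z HZ. change (orient v1 v2 Z = 0) in HZ.
    rewrite (orient_along_across ux uy Hu), Hal1, Hal2, Hac1, Hac2 in HZ.
    apply Rminus_diag_uniq, (Rmult_eq_reg_l (2 * s)); lra. }
  assert (Haxis : forall Z, collinear v1 v2 Z ->
    axis_map ux uy h s Z = (along ux uy Z / s, 0)).
  { intros Z HZ. unfold axis_map, axis_den. rewrite (Hline Z HZ).
    replace (1 - h * h) with (s ^ 2) by lra. f_equal; field; lra. }
  assert (Hdist : forall Z, collinear v1 v2 Z -> edist v1 Z = Rabs (along ux uy Z + s)).
  { intros Z HZ. rewrite (edist_along_across ux uy Hu), Hal1, Hac1, (Hline Z HZ).
    rewrite <- sqrt_Rsqr_abs. f_equal. unfold Rsqr. ring. }
  assert (HaxisD : forall Z, collinear v1 v2 Z -> in_D Z -> -1 < along ux uy Z / s < 1).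
  { intros Z HZ HDZ. apply (klein_map_D _ (axis_map_klein ux uy h s Hu Hhs Hs)) in HDZ.
    rewrite Haxis in HDZ by assumption. unfold in_D in HDZ; cbn [fst snd] in HDZ. split; nra. }
  exists (axis_map ux uy h s), (axis_map_inv ux uy h s),
    (along ux uy P / s), (along ux uy Q / s).
  split; [apply axis_map_bijection; assumption|].
  split; [rewrite Haxis, Hal1; [f_equal; field; lra | unfold collinear, orient; ring]|].
  split; [rewrite Haxis, Hal2; [f_equal; field; lra | unfold collinear, orient; ring]|].
  split; [apply Haxis; assumption|]. split; [apply Haxis; assumption|].
  pose proof (HaxisD P HcP HP); pose proof (HaxisD Q HcQ HQ).
  rewrite (Hdist P HcP), (Hdist Q HcQ) in Hd.
  replace (along ux uy P) with (along ux uy P / s * s) in Hd by (field; lra).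
  replace (along ux uy Q) with (along ux uy Q / s * s) in Hd by (field; lra).
  set (p := along ux uy P / s) in *. set (q := along ux uy Q / s) in *.
  rewrite !Rabs_right in Hd by nra. nra.
Qed.

(* The second intersection of the circle with the line of slope [t] through (-1, 0). *)
Definition circle_point (t : R) : pt := ((1 - t ^ 2) / (1 + t ^ 2), 2 * t / (1 + t ^ 2)).

Lemma one_plus_sq_pos t : 0 < 1 + t ^ 2.
Proof. pose proof (pow2_ge_0 t). lra. Qed.

Lemma circle_point_on_S1 t : on_S1 (circle_point t).
Proof. unfold on_S1, circle_point; cbn [fst snd]. pose proof (one_plus_sq_pos t). field. lra. Qed.

Lemma circle_point_slope t : snd (circle_point t) / (1 + fst (circle_point t)) = t.
Proof.
  unfold circle_point; cbn [fst snd]. pose proof (one_plus_sq_pos t). field. split; lra.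
Qed.

Lemma circle_point_inj t t' : circle_point t = circle_point t' -> t = t'.
Proof. intros E. rewrite <- (circle_point_slope t), <- (circle_point_slope t'), E. reflexivity. Qed.

Lemma circle_point_0 : circle_point 0 = (1, 0).
Proof. unfold circle_point. f_equal; field. Qed.

Lemma circle_point_neq_m1 t : circle_point t <> (-1, 0).
Proof.
  intros E. apply (f_equal fst) in E. unfold circle_point in E; cbn [fst] in E.
  pose proof (one_plus_sq_pos t).
  assert (1 - t ^ 2 = -1 * (1 + t ^ 2)) by (rewrite <- E; field; lra). lra.
Qed.

Lemma on_S1_circle_point W : on_S1 W -> W <> (-1, 0) ->
  W = circle_point (snd W / (1 + fst W)).
Proof.
  destruct W as [a b]. unfold on_S1; cbn [fst snd]. intros H Hm.
  assert (Ha : 1 + a <> 0).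
  { intros Ha. apply Hm. assert (b ^ 2 = 0) by nra. f_equal; nra. }
  unfold circle_point. replace ((b / (1 + a)) ^ 2) with ((1 - a) / (1 + a)).
  - f_equal; field; split; lra.
  - replace ((b / (1 + a)) ^ 2) with (b ^ 2 / (1 + a) ^ 2) by (field; assumption).
    replace (b ^ 2) with ((1 - a) * (1 + a)) by lra. field. assumption.
Qed.

Lemma orient_circle_point_axis p t t1 : orient (circle_point t) (p, 0) (circle_point t1) =
  2 * (t1 - t) * (p - 1 - t * t1 * (1 + p)) / ((1 + t ^ 2) * (1 + t1 ^ 2)).
Proof.
  unfold orient, circle_point; cbn [fst snd].
  pose proof (one_plus_sq_pos t); pose proof (one_plus_sq_pos t1). field. split; lra.
Qed.

Lemma orient_circle_point_axis_m1 p t : orient (circle_point t) (p, 0) (-1, 0) =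
  - 2 * t * (1 + p) / (1 + t ^ 2).
Proof. unfold orient, circle_point; cbn [fst snd]. pose proof (one_plus_sq_pos t). field. lra. Qed.

Lemma orient_m1_circle_point t X Y : orient (-1, 0) (circle_point t) (X, Y) =
  2 * (Y - t * (X + 1)) / (1 + t ^ 2).
Proof. unfold orient, circle_point; cbn [fst snd]. pose proof (one_plus_sq_pos t). field. lra. Qed.

Lemma orient_1_circle_point t X Y : orient (1, 0) (circle_point t) (X, Y) =
  - 2 * t * (t * Y + X - 1) / (1 + t ^ 2).
Proof. unfold orient, circle_point; cbn [fst snd]. pose proof (one_plus_sq_pos t). field. lra. Qed.

Lemma div_eq0 a b : a / b = 0 -> b <> 0 -> a = 0.
Proof.
  intros E Hb. apply (Rmult_eq_reg_r (/ b)); [rewrite Rmult_0_l; exact E|].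
  apply Rinv_neq_0_compat, Hb.
Qed.

Lemma second_intersection_axis p t W1 : -1 < p < 1 -> t <> 0 ->
  on_S1 W1 -> W1 <> circle_point t -> collinear (circle_point t) (p, 0) W1 ->
  exists t1, W1 = circle_point t1 /\ t * t1 * (1 + p) = p - 1.
Proof.
  intros Hp Ht HW1 Hne Hc.
  assert (Hm1 : W1 <> (-1, 0)).
  { intros ->. change (orient (circle_point t) (p, 0) (-1, 0) = 0) in Hc.
    rewrite orient_circle_point_axis_m1 in Hc.
    apply div_eq0 in Hc; [|pose proof (one_plus_sq_pos t); lra].
    apply Ht. nra. }
  rewrite (on_S1_circle_point W1 HW1 Hm1) in Hne, Hc |- *.
  set (t1 := snd W1 / (1 + fst W1)) in *.
  exists t1. split; [reflexivity|].
  change (orient (circle_point t) (p, 0) (circle_point t1) = 0) in Hc.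
  rewrite orient_circle_point_axis in Hc.
  apply div_eq0 in Hc; [|pose proof (one_plus_sq_pos t); pose proof (one_plus_sq_pos t1); nra].
  assert (Ht1 : t1 - t <> 0) by (intros E; apply Hne; f_equal; lra).
  destruct (Rmult_integral _ _ Hc); [exfalso; apply Ht1; lra | lra].
Qed.

(* [t], [t1], [t2] are the [circle_point] parameters of w, w1, w2 in [chord_construction]. *)
Definition axis_params (p q X Y : R) : Prop :=
  exists t t1 t2, t * t1 * (1 + p) = p - 1 /\ t * t2 * (1 + q) = q - 1 /\
    Y = t2 * (X + 1) /\ t1 * Y = 1 - X.

Lemma chord_construction_axis_params p q X Y : -1 < p < 1 -> -1 < q < 1 ->
  (chord_construction (-1, 0) (1, 0) (p, 0) (q, 0) (X, Y) <-> axis_params p q X Y).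
Proof.
  intros Hp Hq. split.
  - intros (w & w1 & w2 & Hw & Hwm & Hwp & Hw1 & Hw1w & Hc1 & Hw2 & Hw2w & Hc2 & HL2 & HL1).
    rewrite (on_S1_circle_point w Hw Hwm) in *.
    set (t := snd w / (1 + fst w)) in *.
    assert (Ht : t <> 0) by (intros E; apply Hwp; rewrite E; apply circle_point_0).
    destruct (second_intersection_axis p t w1 Hp Ht Hw1 Hw1w Hc1) as (t1 & -> & H1).
    destruct (second_intersection_axis q t w2 Hq Ht Hw2 Hw2w Hc2) as (t2 & -> & H2).
    change (orient (-1, 0) (circle_point t2) (X, Y) = 0) in HL2.
    change (orient (1, 0) (circle_point t1) (X, Y) = 0) in HL1.
    rewrite orient_m1_circle_point in HL2. rewrite orient_1_circle_point in HL1.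
    apply div_eq0 in HL1; [|pose proof (one_plus_sq_pos t1); lra].
    apply div_eq0 in HL2; [|pose proof (one_plus_sq_pos t2); lra].
    assert (Ht1 : -2 * t1 <> 0) by (intros E; assert (t1 = 0) by lra; subst; lra).
    exists t, t1, t2. repeat split; try assumption; [lra|].
    destruct (Rmult_integral _ _ HL1); [contradiction | lra].
  - intros (t & t1 & t2 & H1 & H2 & HL2 & HL1).
    assert (Htt1 : t * t1 < 0) by nra. assert (Htt2 : t * t2 < 0) by nra.
    exists (circle_point t), (circle_point t1), (circle_point t2).
    repeat split; try apply circle_point_on_S1.
    + apply circle_point_neq_m1.
    + rewrite <- circle_point_0. intros E. apply circle_point_inj in E. subst. lra.
    + intros E. apply circle_point_inj in E. subst. nra.
    + change (orient (circle_point t) (p, 0) (circle_point t1) = 0).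
      rewrite orient_circle_point_axis. replace (p - 1 - t * t1 * (1 + p)) with 0 by lra.
      unfold Rdiv. ring.
    + intros E. apply circle_point_inj in E. subst. nra.
    + change (orient (circle_point t) (q, 0) (circle_point t2) = 0).
      rewrite orient_circle_point_axis. replace (q - 1 - t * t2 * (1 + q)) with 0 by lra.
      unfold Rdiv. ring.
    + change (orient (-1, 0) (circle_point t2) (X, Y) = 0).
      rewrite orient_m1_circle_point. replace (Y - t2 * (X + 1)) with 0 by lra.
      unfold Rdiv. ring.
    + change (orient (1, 0) (circle_point t1) (X, Y) = 0).
      rewrite orient_1_circle_point. replace (t1 * Y + X - 1) with 0 by lra.
      unfold Rdiv. ring.
Qed.

Lemma axis_params_iff_ellipse p q X Y : -1 < p < 1 -> -1 < q < 1 -> X ^ 2 + Y ^ 2 < 1 ->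
  (axis_params p q X Y <-> (1 - p) * (1 + q) * Y ^ 2 = (1 - q) * (1 + p) * (1 - X ^ 2)).
Proof.
  intros Hp Hq HXY. split.
  - intros (t & t1 & t2 & H1 & H2 & HL2 & HL1).
    cbn [pow]. nsatz.
  - intros HE.
    assert (HX : X ^ 2 < 1) by (pose proof (pow2_ge_0 Y); lra).
    assert (HY : Y <> 0).
    { intros ->. assert (0 < (1 - q) * (1 + p) * (1 - X ^ 2)) by
        (repeat apply Rmult_lt_0_compat; lra). lra. }
    set (t1 := (1 - X) / Y).
    assert (Ht1 : t1 <> 0) by (unfold t1; intros E; apply div_eq0 in E; nra).
    set (t := (p - 1) / ((1 + p) * t1)).
    assert (Ht : t <> 0) by (unfold t; intros E; apply div_eq0 in E; [lra | nra]).
    set (t2 := (q - 1) / ((1 + q) * t)).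
    exists t, t1, t2. repeat split.
    + unfold t. field. split; lra.
    + unfold t2. field. split; lra.
    + assert (HX1 : 1 - X <> 0) by nra.
      assert (Et2 : t2 * (X + 1) = (1 - q) * (1 + p) * (1 - X ^ 2) / ((1 + q) * (1 - p) * Y))
        by (unfold t2, t, t1; field; repeat split; try lra; assumption).
      rewrite Et2, <- HE. field. repeat split; try lra; assumption.
    + unfold t1. field. assumption.
Qed.

Lemma on_chord_axis p q S : p <> q -> (on_chord (p, 0) (q, 0) S <-> in_D S /\ snd S = 0).
Proof.
  intros Hpq. rewrite on_chord_iff by (intros E; injection E; assumption).
  unfold collinear; cbn [fst snd].
  split; intros [HS Hc]; split; try assumption.
  - apply (Rmult_eq_reg_l (q - p)); lra.
  - rewrite Hc. ring.
Qed.

Lemma klein_cosh2_foot X Y : X ^ 2 + Y ^ 2 < 1 ->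
  klein_cosh2 (X, Y) (X, 0) = (1 - X ^ 2) / (1 - X ^ 2 - Y ^ 2).
Proof.
  intros H. unfold klein_cosh2, dot; cbn [fst snd].
  pose proof (pow2_ge_0 Y). field. split; lra.
Qed.

Lemma klein_cosh2_foot_le X Y sg : X ^ 2 + Y ^ 2 < 1 -> sg ^ 2 < 1 ->
  klein_cosh2 (X, Y) (X, 0) <= klein_cosh2 (X, Y) (sg, 0).
Proof.
  intros H Hsg. rewrite klein_cosh2_foot by assumption.
  unfold klein_cosh2, dot; cbn [fst snd].
  pose proof (pow2_ge_0 Y).
  replace ((1 - (X * sg + Y * 0)) ^ 2 / ((1 - (X * X + Y * Y)) * (1 - (sg * sg + 0 * 0))))
    with ((1 - X * sg) ^ 2 / (1 - sg ^ 2) / (1 - X ^ 2 - Y ^ 2)) by (field; split; lra).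
  apply Rmult_le_compat_r; [left; apply Rinv_0_lt_compat; lra|].
  apply (Rmult_le_reg_r (1 - sg ^ 2)); [lra|].
  unfold Rdiv. rewrite Rmult_assoc, Rinv_l, Rmult_1_r by lra.
  pose proof (pow2_ge_0 (X - sg)). nra.
Qed.

Lemma delta_is_axis p q X Y x : p <> q -> X ^ 2 + Y ^ 2 < 1 -> 0 <= x ->
  (delta_is (p, 0) (q, 0) (X, Y) x <-> cosh x ^ 2 = (1 - X ^ 2) / (1 - X ^ 2 - Y ^ 2)).
Proof.
  intros Hpq HR Hx. rewrite <- klein_cosh2_foot by assumption.
  assert (HF : on_chord (p, 0) (q, 0) (X, 0)).
  { apply on_chord_axis; [assumption|]. split; [|reflexivity].
    unfold in_D; cbn [fst snd]. pose proof (pow2_ge_0 Y). lra. }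
  assert (Hmin : forall S, on_chord (p, 0) (q, 0) S ->
    in_D S /\ klein_cosh2 (X, Y) (X, 0) <= klein_cosh2 (X, Y) S).
  { intros [s1 s2] HS. apply on_chord_axis in HS as [HS E]; [|assumption].
    cbn [snd] in E; subst s2. split; [assumption|].
    apply klein_cosh2_foot_le; [assumption|]. unfold in_D in HS; cbn [fst snd] in HS. lra. }
  destruct (Hmin _ HF) as [HFD _].
  split.
  - intros [[S [HS <-]] Hle]. destruct (Hmin S HS) as [HSD HG].
    rewrite cosh_dK_sq by assumption. apply Rle_antisym; [|assumption].
    rewrite <- !cosh_dK_sq by assumption.
    rewrite <- cosh_sq_le_iff by apply dK_nonneg. apply Hle, HF.
  - intros E. split.
    + exists (X, 0). split; [assumption|]. symmetry. apply eq_dK_iff; assumption.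
    + intros S HS. destruct (Hmin S HS). rewrite le_dK_iff by assumption. lra.
Qed.

Definition axis_cross_ratio (p q : R) : R := (1 + q) * (1 - p) / ((1 - q) * (1 + p)).

Lemma axis_cross_ratio_gt1 p q : -1 < p -> p < q -> q < 1 -> 1 < axis_cross_ratio p q.
Proof.
  intros Hp Hpq Hq. unfold axis_cross_ratio.
  apply (Rmult_lt_reg_r ((1 - q) * (1 + p))); [nra|]. field_simplify; nra.
Qed.

Lemma exp_dK_axis p q : -1 < p -> p < q -> q < 1 ->
  exp (dK (p, 0) (q, 0)) ^ 2 = axis_cross_ratio p q.
Proof.
  intros Hp Hpq Hq.
  assert (p ^ 2 < 1) by nra. assert (q ^ 2 < 1) by nra.
  pose proof (axis_cross_ratio_gt1 p q Hp Hpq Hq) as HE.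
  assert (HG : klein_cosh2 (p, 0) (q, 0) = (axis_cross_ratio p q + / axis_cross_ratio p q + 2) / 4).
  { unfold klein_cosh2, dot, axis_cross_ratio; cbn [fst snd]. field. repeat split; nra. }
  assert (Hc : cosh (dK (p, 0) (q, 0)) ^ 2 = klein_cosh2 (p, 0) (q, 0))
    by (apply cosh_dK_sq; unfold in_D; cbn [fst snd]; lra).
  rewrite cosh_sq_exp, HG in Hc.
  apply inv_sum_inj; [pose proof (exp_ge1 _ (dK_nonneg (p, 0) (q, 0))); nra | lra | lra].
Qed.

Lemma DeltaK_pos n P Q : 0 < INR n * dK P Q -> 0 < DeltaK n P Q.
Proof.
  intros H. unfold DeltaK. set (e := exp (INR n * dK P Q)).
  assert (He : 1 < e) by (pose proof (exp_ineq1 _ (Rgt_not_eq _ _ H)); unfold e; lra).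
  rewrite <- ln_1. apply ln_increasing; [lra|].
  apply (Rmult_lt_reg_r (e - 1)); [lra|]. field_simplify; lra.
Qed.

Lemma cosh_half_DeltaK1_sq P Q : 1 < exp (dK P Q) ->
  cosh (/ 2 * DeltaK 1 P Q) ^ 2 = exp (dK P Q) ^ 2 / (exp (dK P Q) ^ 2 - 1).
Proof.
  intros He. unfold DeltaK. rewrite Rmult_1_l. set (e := exp (dK P Q)) in *.
  rewrite cosh_half_ln_sq by (apply Rdiv_lt_0_compat; lra).
  field. repeat split; nra.
Qed.

Lemma div_eq_div_iff a b c d : b <> 0 -> d <> 0 -> (a / b = c / d <-> a * d = c * b).
Proof.
  intros Hb Hd. split; intros H.
  - apply (Rmult_eq_reg_r (/ b * / d)); [|apply Rmult_integral_contrapositive; split;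
      apply Rinv_neq_0_compat; assumption].
    replace (a * d * (/ b * / d)) with (a / b) by (field; split; assumption).
    rewrite H. field. split; assumption.
  - apply (Rmult_eq_reg_r (b * d)); [|apply Rmult_integral_contrapositive; split; assumption].
    replace (a / b * (b * d)) with (a * d) by (field; assumption).
    rewrite H. field. assumption.
Qed.

Lemma foot_iff_ellipse p q X Y : -1 < p -> p < q -> q < 1 -> X ^ 2 + Y ^ 2 < 1 ->
  ((1 - X ^ 2) / (1 - X ^ 2 - Y ^ 2) = (1 + q) * (1 - p) / (2 * (q - p)) <->
   (1 - p) * (1 + q) * Y ^ 2 = (1 - q) * (1 + p) * (1 - X ^ 2)).
Proof.
  intros Hp Hpq Hq HXY.
  rewrite div_eq_div_iff by lra.
  split; intros; lra.
Qed.

Lemma chord_construction_axis_iff_delta p q X Y :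
  -1 < p -> p < q -> q < 1 -> X ^ 2 + Y ^ 2 < 1 ->
  (chord_construction (-1, 0) (1, 0) (p, 0) (q, 0) (X, Y) <->
   delta_is (p, 0) (q, 0) (X, Y) (/ 2 * DeltaK 1 (p, 0) (q, 0))).
Proof.
  intros Hp Hpq Hq HXY.
  pose proof (exp_dK_axis p q Hp Hpq Hq) as HE.
  assert (He : 1 < exp (dK (p, 0) (q, 0))).
  { pose proof (axis_cross_ratio_gt1 p q Hp Hpq Hq).
    pose proof (exp_pos (dK (p, 0) (q, 0))). nra. }
  assert (Hd : 0 < INR 1 * dK (p, 0) (q, 0)).
  { rewrite Rmult_1_l. destruct (dK_nonneg (p, 0) (q, 0)) as [|E]; [assumption|].
    rewrite <- E, exp_0 in He. lra. }
  rewrite chord_construction_axis_params, axis_params_iff_ellipse by lra.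
  rewrite delta_is_axis by (pose proof (DeltaK_pos 1 _ _ Hd); lra).
  rewrite cosh_half_DeltaK1_sq, HE, <- foot_iff_ellipse by assumption.
  replace (axis_cross_ratio p q / (axis_cross_ratio p q - 1))
    with ((1 + q) * (1 - p) / (2 * (q - p))) by (unfold axis_cross_ratio; field; repeat split; lra).
  split; intros; symmetry; assumption.
Qed.

Theorem lemma4p2 (P Q v1 v2 R0 : pt) :
  in_D P -> in_D Q -> P <> Q ->
  on_S1 v1 -> on_S1 v2 -> v1 <> v2 ->
  collinear v1 v2 P -> collinear v1 v2 Q ->
  edist v1 P < edist v1 Q ->
  in_D R0 ->
  ((exists w w1 w2 : pt,
      on_S1 w /\ w <> v1 /\ w <> v2 /\
      on_S1 w1 /\ w1 <> w /\ collinear w P w1 /\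
      on_S1 w2 /\ w2 <> w /\ collinear w Q w2 /\
      collinear v1 w2 R0 /\ collinear v2 w1 R0)
   <-> delta_is P Q R0 (/ 2 * DeltaK 1 P Q)).
Proof.
  intros HP HQ HPQ Hv1 Hv2 Hv12 HcP HcQ Hd HR.
  destruct (chord_to_axis v1 v2 P Q Hv1 Hv2 Hv12 HcP HcQ HP HQ Hd)
    as (f & g & p & q & Hfg & Hfv1 & Hfv2 & HfP & HfQ & Hp & Hpq & Hq).
  change (chord_construction v1 v2 P Q R0 <-> delta_is P Q R0 (/ 2 * DeltaK 1 P Q)).
  assert (HDelta : DeltaK 1 (f P) (f Q) = DeltaK 1 P Q)
    by (unfold DeltaK; rewrite (klein_map_dK f (proj1 Hfg)) by assumption; reflexivity).
  rewrite (chord_construction_transfer f g), (delta_is_transfer f g), <- HDelta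
    by auto using in_D_cD, on_S1_cD.
  assert (HfR : in_D (f R0)) by (apply (klein_map_D f (proj1 Hfg)), HR).
  rewrite Hfv1, Hfv2, HfP, HfQ. destruct (f R0) as [X Y].
  apply chord_construction_axis_iff_delta; assumption.
Qed.
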